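(* Let $X$ be a topological space with $|X|\ge 2$, $G$ an infinite Abelian group, and $f\colon G\to X$ a Korovin mapping. Then the Korovin orbit $G_f$ is a $T_3$-space if and only if $X$ is a $T_3$-space.
   Context: $X^G$ carries the product topology. For $f\in X^G$ and $g\in G$ let $gf\in X^G$ be given by $(gf)(x)=f(xg)$, and let $G_f=\{gf:g\in G\}\subseteq X^G$ with the subspace topology. The map $f\colon G\to X$ is a Korovin mapping if $\pi_M(G_f)=X^M$ for every countable $M\subseteq G$, where $\pi_M\colon X^G\to X^M$ is the projection; in that case $G_f$ is called a Korovin orbit. A space is $T_3$ if every open neighborhood $U$ of a point $x$ contains an open neighborhood $V$ of $x$ with $\overline{V}\subseteq U$ (no $T_1$ assumed). *)

From HB Require Import structures.
From mathcomp Require Import all_boot all_order all_algebra.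
From mathcomp Require Import all_classical all_reals all_analysis.
Set Implicit Arguments. Unset Strict Implicit. Unset Printing Implicit Defensive.
Import GRing.Theory.
Local Open Scope classical_set_scope.
Local Open Scope ring_scope.

(* T3 as in the paper (no T1): every open neighbourhood U of x contains an
   open neighbourhood V of x with closure V contained in U. *)
Definition T3_space (T : topologicalType) : Prop :=
  forall (x : T) (U : set T), open U -> U x ->
    exists V : set T, [/\ open V, V x, V `<=` U & closure V `<=` U].

Definition translate (G : zmodType) (X : Type) (f : G -> X) (g : G) : G -> X :=
  fun x => f (x + g).

Definition orbit_set (G : zmodType) (X : topologicalType) (f : G -> X)
  : set {ptws G -> X} := range (translate f).

(* Korovin mapping: for every countable M ⊆ G, π_M(G_f) = X^M, i.e. every
   x-valued function on M is the restriction to M of some gf. *)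
Definition korovin_mapping (G : zmodType) (X : Type) (f : G -> X) : Prop :=
  forall M : set G, countable M ->
    forall h : set_type M -> X,
      exists g : G, forall m : set_type M, translate f g (set_val m) = h m.

From HB Require Import structures.
From mathcomp Require Import all_boot all_order all_algebra.
From mathcomp Require Import all_classical all_reals all_analysis.
Set Implicit Arguments.
Unset Strict Implicit.
Unset Printing Implicit Defensive.
Local Open Scope classical_set_scope.
Local Open Scope ring_scope.

(* Regularity passes to the initial topology of any family of maps into
   regular spaces, hence to X^G and to its subspace G_f.  Conversely, all that
   is used of a Korovin orbit P is that its restrictions to each finite s ⊆ G
   exhaust X^s.  Given x ∈ U, take p ∈ P with p(0) = x and a box W around
   p with cl W ⊆ [q(0) ∈ U]; let N be the factor of W at 0.  For y ∈ cl N,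
   the point k ∈ P agreeing with p on the box except k(0) = y lies in cl W:
   any box around k meets W at a point k' with k'(0) ∈ N near y and the
   other finitely many coordinates fixed.  Hence cl N ⊆ U. *)

Lemma initial_cvg (S : choiceType) (T : topologicalType) (f : S -> T)
    (F : set_system S) (s : S) :
  Filter F -> f @ F --> f s -> F --> (s : initial_topology f).
Proof.
move=> FF fFs B; rewrite nbhsE => -[_ [[D oD <-] Ds] DB].
by apply: filterS DB _; apply: fFs; apply: open_nbhs_nbhs.
Qed.

Lemma set_type_cvg (T : topologicalType) (A : set T)
    (F : set_system (set_type A)) (p : set_type A) :
  Filter F -> set_val @ F --> set_val p -> F --> p.
Proof. exact: initial_cvg. Qed.

Lemma set_type_nbhs (T : topologicalType) (A : set T) (p : set_type A)
    (B : set (set_type A)) :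
  nbhs p B -> exists2 D, nbhs (set_val p) D & set_val @^-1` D `<=` B.
Proof.
rewrite [nbhs p]nbhsE => -[_ [[D oD <-] Dp] DB].
by exists D => //; apply: open_nbhs_nbhs.
Qed.

Lemma ptws_proj_continuous (I : Type) (X : topologicalType) (i : I) :
  continuous (fun q : {ptws I -> X} => q i).
Proof.
move=> q; have /cvg_sup/(_ i) qi : nbhs q --> q by exact: cvg_id.
apply: cvg_trans (@initial_continuous _ X (fun q : I -> X => q i) q).
exact: cvg_app.
Qed.

Lemma ptws_cvg (I : Type) (X : topologicalType)
    (F : set_system {ptws I -> X}) (p : {ptws I -> X}) :
  Filter F -> (forall i, (fun q => q i) @ F --> p i) -> F --> p.
Proof. by move=> FF Fp; apply/cvg_sup => i; exact: initial_cvg. Qed.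

Lemma ptws_nbhs_box (I : eqType) (X : topologicalType) (p : {ptws I -> X})
    (B : set {ptws I -> X}) :
  nbhs p B -> exists (s : seq I) (N : I -> set X),
    (forall a, nbhs (p a) (N a)) /\
    forall q : I -> X, {in s, forall a, N a (q a)} -> B q.
Proof.
pose box : set_system {ptws I -> X} := [set B | exists (s : seq I) N,
  (forall a, nbhs (p a) (N a)) /\
  forall q : I -> X, {in s, forall a, N a (q a)} -> B q].
have box_filter : Filter box.
  constructor.
  - by exists [::], (fun=> setT); split => // a; exact: filterT.
  - move=> B1 B2 [s1 [N1 [nN1 box1]]] [s2 [N2 [nN2 box2]]].
    exists (s1 ++ s2), (fun a => N1 a `&` N2 a); split=> [a|q qN].
      exact: filterI.
    split; [apply: box1 | apply: box2] => a sa;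
      by have [] := qN a; rewrite // mem_cat sa ?orbT.
  - move=> B1 B2 B12 [s [N [nN boxB1]]].
    by exists s, N; split=> // q /boxB1/B12.
suff : box --> p by apply.
apply: ptws_cvg => i M nM.
exists [:: i], (fun a => if a == i then M else setT); split.
  by move=> a; case: eqP => [->//|_]; exact: filterT.
by move=> q /(_ i); rewrite mem_seq1 eqxx; apply.
Qed.

Lemma closure_preimage {S T : topologicalType} {f : S -> T} (A : set T) :
  continuous f -> closure (f @^-1` A) `<=` f @^-1` closure A.
Proof. by move=> cf x clx B /cf /clx [y [Ay By]]; exists (f y). Qed.

Lemma regular_initial (S : topologicalType) (I : Type)
    (T : I -> topologicalType) (f : forall i, S -> T i) :
  (forall i, continuous (f i)) -> (forall i, regular_space (T i)) ->
  (forall (F : set_system S) s,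
    Filter F -> (forall i, f i @ F --> f i s) -> F --> s) ->
  regular_space S.
Proof.
move=> cf rT fcvg x; apply: fcvg => [|i N /(rT i) [N' nN' clN']].
  apply: filter_from_filter; first by exists setT; exact: filterT.
  by move=> A B nA nB; exists (A `&` B); [exact: filterI | exact: closureI].
exists (f i @^-1` N'); first exact: cf.
by move=> y /(closure_preimage (cf i)) /clN'.
Qed.

Lemma regular_ptws (I : Type) (X : topologicalType) :
  regular_space X -> regular_space {ptws I -> X}.
Proof.
move=> rX.
apply: (@regular_initial {ptws I -> X} I (fun=> X) (fun i q => q i)) => //.
- exact: ptws_proj_continuous.
- by move=> F p FF; exact: ptws_cvg.
Qed.

Lemma regular_set_type (T : topologicalType) (A : set T) :
  regular_space T -> regular_space (set_type A).
Proof.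
move=> rT; apply: (@regular_initial _ unit (fun=> T) (fun=> set_val)) => //.
- by move=> _; exact: initial_continuous.
- by move=> F p FF /(_ tt); exact: set_type_cvg.
Qed.

Lemma T3_regular (T : topologicalType) : T3_space T <-> regular_space T.
Proof.
split=> [T3 x U | rT x U oU Ux].
  rewrite {1}nbhsE => -[V [oV Vx] VU].
  have [W [oW Wx _ clW]] := T3 x V oV Vx.
  by exists W; [exact: open_nbhs_nbhs | exact: subset_trans VU].
have [W nW clW] := rT x U (open_nbhs_nbhs (conj oU Ux)).
have intW : W° `<=` W by exact: interior_subset.
exists W°; split=> //; first exact: open_interior.
- by apply: subset_trans clW; exact: subset_trans (@subset_closure _ W).
- by apply: subset_trans clW; exact: closureS.
Qed.

Definition finitely_full (I : eqType) (X : Type) (P : set (I -> X)) :=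
  forall (s : seq I) (h : I -> X), exists2 q, P q & {in s, q =1 h}.

Section FinitelyFull.
Variables (I : eqType) (X : topologicalType) (P : set {ptws I -> X}).
Hypothesis full : finitely_full P.

Let full_point (s : seq I) (h : I -> X) :
  exists p : set_type P, {in s, set_val p =1 h}.
Proof. by have [q Pq qh] := full s h; exists (exist _ q (mem_set Pq)). Qed.

Lemma set_type_nbhs_box (p : set_type P) (B : set (set_type P)) :
  nbhs p B -> exists (s : seq I) (N : I -> set X),
    (forall a, nbhs (set_val p a) (N a)) /\
    forall q : set_type P, {in s, forall a, N a (set_val q a)} -> B q.
Proof.
move=> /set_type_nbhs [D /ptws_nbhs_box [s [N [nN boxD]]] DB].
by exists s, N; split=> // q /boxD /DB.
Qed.

Lemma closure_box_proj (i : I) (p : set_type P) (s : seq I) (N : I -> set X)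
    (W : set (set_type P)) :
  (forall a, nbhs (set_val p a) (N a)) ->
  (forall q : set_type P, {in s, forall a, N a (set_val q a)} -> W q) ->
  closure (N i) `<=` (fun q : set_type P => set_val q i) @` closure W.
Proof.
move=> nN boxW y clNy.
have [k kE] := full_point (i :: s) (fun a => if a == i then y else set_val p a).
have ki : set_val k i = y by rewrite kE ?mem_head ?eqxx.
exists k => // B /set_type_nbhs_box [s' [N' [nN' boxB]]].
have [z [Nz N'z]] : N i `&` N' i !=set0 by apply: clNy; rewrite -ki; exact: nN'.
have [k' k'E] := full_point (i :: s ++ s')
  (fun a => if a == i then z else if a \in s then set_val p a else set_val k a).
exists k'; split.
- apply: boxW => a sa; rewrite k'E; last by rewrite inE mem_cat sa orbT.
  by case: eqP => [->//|_]; rewrite sa; exact: nbhs_singleton.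
- apply: boxB => a s'a; rewrite k'E; last by rewrite inE mem_cat s'a !orbT.
  case: eqP => [->//|ai]; case: ifP => sa; last exact: nbhs_singleton.
  have := nbhs_singleton (nN' a); rewrite kE; last by rewrite inE sa orbT.
  by case: eqP.
Qed.

Lemma regular_of_finitely_full (i : I) :
  regular_space (set_type P) -> regular_space X.
Proof.
move=> rP x U nU.
have [p pE] := full_point [:: i] (fun=> x).
have pi : set_val p i = x by rewrite pE ?mem_head.
have nO : nbhs p [set q : set_type P | U (set_val q i)].
  have pcont : {for p, continuous ((fun q : {ptws I -> X} => q i) \o set_val)}.
    apply: continuous_comp; first exact: initial_continuous.
    exact: ptws_proj_continuous.
  by apply: pcont; rewrite /= pi.
have [W nW clW] := rP p _ nO.
have [s [N [nN boxW]]] := set_type_nbhs_box nW.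
exists (N i); first by rewrite -pi.
by move=> y /(closure_box_proj nN boxW) [q /clW Uq <-].
Qed.

End FinitelyFull.

Lemma korovin_finitely_full (G : zmodType) (X : topologicalType) (f : G -> X) :
  korovin_mapping f -> finitely_full (orbit_set f).
Proof.
move=> K s h.
have cs : countable [set` s] by apply: finite_set_countable; exact: finite_seq.
have [g gh] := K _ cs (fun m => h (set_val m)).
exists (translate f g); first by exists g.
by move=> a sa; exact: (gh (exist _ a (mem_set sa))).
Qed.

Theorem proposition4p4 (X : topologicalType) (G : zmodType) (f : G -> X) :
  (exists x y : X, x <> y) ->
  infinite_set [set: G] ->
  korovin_mapping f ->
  (T3_space (set_type (orbit_set f)) <-> T3_space X).
Proof.
move=> _ _ /korovin_finitely_full full; rewrite !T3_regular; split.
  exact: regular_of_finitely_full full 0.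
by move=> rX; apply/regular_set_type/regular_ptws.
Qed.
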